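(* Let $f$, $u_{0s}$, $c_0$, $b_0$, $p$ be as in the context and assume $\|b_0\|_{L^1(-\infty,0)}<\infty$ and $\sup_{x\le0}|b_0(x)c_0(x)|<\infty$. Then there exists $\Lambda>0$ such that every $\sigma\in\mathbb{C}$ with $\Re(\sigma)>0$ and $\int_{-\infty}^{0}b_0(\xi)e^{-\sigma p(\xi)}\,d\xi=c_0(0)$ satisfies $|\Im(\sigma)|<\Lambda$.
   Context: Let $q>0$ and let $f:(-\infty,0]\times(0,\infty)\to[0,\infty)$ be such that for each $u>0$, $x\mapsto f(x,u)$ is continuous and integrable, $\partial f/\partial u$ exists and is continuous, and $\int_{-\infty}^0 f(x,u)\,dx=q/2$ independently of $u$. Let $u_{0s}=2\sqrt q$. Define $c_0(x)=\sqrt{2\int_{-\infty}^x f(y,u_{0s})\,dy}$ for $x\le0$ (so $c_0(0)=u_{0s}/2>0$), and assume $c_0(x)>0$ for all $x\le0$. Define $b_0(x)=\frac{\partial f}{\partial u}(x,u_{0s})+\frac{f(x,u_{0s})}{2c_0(x)}$ and $p(x)=\int_x^0 dy/c_0(y)$. *)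

From Stdlib Require Import Reals.
Open Scope R_scope.

Definition RInt_eq (g : R -> R) (a b v : R) : Prop :=
  exists pr : Riemann_integrable g a b, RiemannInt pr = v.

Definition improper_int_upto (g : R -> R) (a l : R) : Prop :=
  forall eps, 0 < eps -> exists N, forall M, N <= M ->
    exists v, RInt_eq g (-M) a v /\ Rabs (v - l) < eps.

Definition u0s (q : R) : R := 2 * sqrt q.

(* Ic x is meant to be \int_{-oo}^x f(y,u0s) dy *)
Definition c0 (Ic : R -> R) (x : R) : R := sqrt (2 * Ic x).

Definition b0 (f fu : R -> R -> R) (q : R) (Ic : R -> R) (x : R) : R :=
  fu x (u0s q) + f x (u0s q) / (2 * c0 Ic x).

From Stdlib Require Import Reals Lra.
From Coquelicot Require Import Coquelicot.
Open Scope R_scope.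

(* The proof is a uniform Riemann-Lebesgue argument.  Change variables to the
   travel time: on [-M, 0] the integrand is  h * (w e^{-aP} cos(bP))  with
   h = b0 c0 continuous and bounded, w = 1/c0 and P' = -w, so the second factor
   is the derivative of  G = -F(P),  F an explicit primitive of e^{-as} cos(bs)
   with |F| <= 2/|b| for every a >= 0.  Cutting [-M, 0] into cells on which h
   is nearly constant gives  |\int_{-M}^0 ...| < eps  for |b| large
   (damped_oscillation_small).  The tail beyond M is controlled by the
   integrability of |b0|, and with eps = c0(0)/3 the value c0(0) cannot be
   reached (improper_int_value_bound). *)

Lemma RInt_eq_RInt (g : R -> R) (a b v : R) :
  RInt_eq g a b v -> ex_RInt g a b /\ RInt g a b = v.
Proof.
  intros [pr Hpr]; split.
  - exact (ex_RInt_Reals_1 g a b pr).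
  - rewrite (RInt_Reals g a b pr); exact Hpr.
Qed.

Lemma ex_RInt_continuity (g : R -> R) (a b : R) :
  (forall x, continuity_pt g x) -> ex_RInt g a b.
Proof.
  intros Hg; apply (ex_RInt_continuous (V:=R_CompleteNormedModule)).
  intros z _; apply continuity_pt_filterlim, Hg.
Qed.

Lemma RInt_abs_le (g k : R -> R) (a b : R) :
  a <= b -> ex_RInt g a b -> ex_RInt k a b ->
  (forall x, a <= x <= b -> Rabs (g x) <= k x) -> Rabs (RInt g a b) <= RInt k a b.
Proof.
  intros Hab Hg Hk H.
  apply (norm_RInt_le (V:=R_NormedModule) g k a b _ _ Hab H);
    apply (RInt_correct (V:=R_CompleteNormedModule)); assumption.
Qed.

Lemma RInt_Chasles_R (g : R -> R) (a b c : R) :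
  ex_RInt g a b -> ex_RInt g b c -> RInt g a c = RInt g a b + RInt g b c.
Proof. intros; symmetry; apply (RInt_Chasles (V:=R_CompleteNormedModule)); auto. Qed.

Lemma improper_int_difference (F I : R -> R) :
  (forall x, x <= 0 -> improper_int_upto F x (I x)) ->
  forall x y, x <= y <= 0 -> ex_RInt F x y /\ I y - I x = RInt F x y.
Proof.
  intros HI x y Hxy.
  assert (Approx : forall eps, 0 < eps -> ex_RInt F x y /\
            Rabs (I y - I x - RInt F x y) < 2 * eps).
  { intros eps Heps.
    destruct (HI x ltac:(lra) eps Heps) as [N1 H1].
    destruct (HI y ltac:(lra) eps Heps) as [N2 H2].
    set (M := Rmax (Rmax N1 N2) (- x)).
    destruct (H1 M ltac:(unfold M; repeat (apply Rmax_Rle; left); lra))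
      as [v1 [R1 A1]].
    destruct (H2 M ltac:(unfold M; apply Rmax_Rle; left; apply Rmax_Rle; right; lra))
      as [v2 [R2 A2]].
    assert (Mx : - M <= x) by (unfold M; generalize (Rmax_r (Rmax N1 N2) (- x)); lra).
    apply RInt_eq_RInt in R1 as [E1 V1]; apply RInt_eq_RInt in R2 as [E2 V2].
    assert (Exy : ex_RInt F x y)
      by (apply (ex_RInt_Chasles_2 (V:=R_CompleteNormedModule) F (-M)); auto; lra).
    split; [exact Exy|].
    rewrite (RInt_Chasles_R F (-M) x y), V1 in V2 by auto.
    replace (I y - I x - RInt F x y) with (- (v2 - I y) + (v1 - I x)) by lra.
    eapply Rle_lt_trans; [apply Rabs_triang|]; rewrite Rabs_Ropp; lra. }
  destruct (Approx 1 Rlt_0_1) as [Hex _]; split; [exact Hex|].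
  destruct (Req_dec (I y - I x - RInt F x y) 0) as [E|Hne]; [lra|].
  destruct (Approx (Rabs (I y - I x - RInt F x y) / 2)) as [_ K].
  - apply Rdiv_lt_0_compat; [apply Rabs_pos_lt|]; lra.
  - lra.
Qed.

Lemma improper_int_tail (g : R -> R) (l : R) :
  improper_int_upto g 0 l -> forall eps, 0 < eps -> exists N,
    forall M M', N <= M <= M' ->
      ex_RInt g (-M') (-M) /\ Rabs (RInt g (-M') (-M)) < eps.
Proof.
  intros Hg eps Heps.
  destruct (Hg (eps / 2) ltac:(lra)) as [N HN].
  exists (Rmax N 0); intros M M' HM.
  assert (N <= M /\ 0 <= M) as [HNM HM0]
    by (generalize (Rmax_l N 0) (Rmax_r N 0); lra).
  destruct (HN M HNM) as [v [Rv Av]]; destruct (HN M' ltac:(lra)) as [v' [Rv' Av']].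
  apply RInt_eq_RInt in Rv as [_ Vv]; apply RInt_eq_RInt in Rv' as [Ev' Vv'].
  assert (E1 : ex_RInt g (-M') (-M))
    by (apply (ex_RInt_Chasles_1 (V:=R_CompleteNormedModule) g _ _ 0); auto; lra).
  assert (E2 : ex_RInt g (-M) 0)
    by (apply (ex_RInt_Chasles_2 (V:=R_CompleteNormedModule) g (-M')); auto; lra).
  split; [exact E1|].
  rewrite (RInt_Chasles_R g (-M') (-M) 0), Vv in Vv' by auto.
  replace (RInt g (-M') (-M)) with ((v' - l) - (v - l)) by lra.
  eapply Rle_lt_trans; [apply Rabs_triang|]; rewrite Rabs_Ropp; lra.
Qed.

Lemma improper_int_value_bound (g k : R -> R) (l eps M : R) :
  improper_int_upto g 0 l -> 0 <= M ->
  (forall x, x <= 0 -> Rabs (g x) <= k x) ->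
  (forall M', M <= M' -> ex_RInt k (-M') (-M) /\ Rabs (RInt k (-M') (-M)) < eps) ->
  Rabs (RInt g (-M) 0) < eps -> Rabs l < 3 * eps.
Proof.
  intros Hg HM Hdom Htail Hcore.
  assert (Heps : 0 < eps) by (generalize (Rabs_pos (RInt g (-M) 0)); lra).
  destruct (Hg eps Heps) as [N HN].
  set (M' := Rmax N M).
  destruct (HN M' (Rmax_l N M)) as [v [Rv Av]].
  apply RInt_eq_RInt in Rv as [Ev Vv].
  destruct (Htail M' (Rmax_r N M)) as [Ek Hk].
  assert (MM' : - M' <= - M) by (generalize (Rmax_r N M); unfold M'; lra).
  assert (E1 : ex_RInt g (-M') (-M))
    by (apply (ex_RInt_Chasles_1 (V:=R_CompleteNormedModule) g _ _ 0); auto; lra).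
  assert (E2 : ex_RInt g (-M) 0)
    by (apply (ex_RInt_Chasles_2 (V:=R_CompleteNormedModule) g (-M')); auto; lra).
  assert (Far : Rabs (RInt g (-M') (-M)) <= Rabs (RInt k (-M') (-M))).
  { eapply Rle_trans; [|apply Rle_abs].
    apply RInt_abs_le; [lra|exact E1|exact Ek|intros x Hx; apply Hdom; lra]. }

  rewrite (RInt_Chasles_R g (-M') (-M) 0) in Vv by auto.
  replace l with (- (v - l) + RInt g (-M') (-M) + RInt g (-M) 0) by lra.
  generalize (Rabs_triang (- (v - l) + RInt g (-M') (-M)) (RInt g (-M) 0))
    (Rabs_triang (- (v - l)) (RInt g (-M') (-M))); rewrite Rabs_Ropp; lra.
Qed.

Definition continuous_nonpos (k : R -> R) : Prop :=
  forall x, x <= 0 -> forall eps, 0 < eps -> exists d, 0 < d /\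
    forall y, y <= 0 -> Rabs (y - x) < d -> Rabs (k y - k x) < eps.

Lemma limit1_in_continuous_nonpos (k : R -> R) :
  (forall x, x <= 0 -> limit1_in k (fun y => y <= 0) (k x) x) -> continuous_nonpos k.
Proof.
  intros H x Hx eps Heps.
  destruct (H x Hx eps Heps) as [d [Hd Hk]].
  exists d; split; [exact Hd|]; intros y Hy Hyx; exact (Hk y (conj Hy Hyx)).
Qed.

(* Clamping at 0 turns continuity on (-oo, 0] into continuity on R; this lets
   us use the Riemann-integral theory of everywhere continuous functions. *)
Lemma continuity_clamp (k : R -> R) :
  continuous_nonpos k -> forall x, continuity_pt (fun y => k (Rmin y 0)) x.
Proof.
  intros Hk x eps Heps.
  destruct (Hk (Rmin x 0) (Rmin_r _ _) eps Heps) as [d [Hd Hy]].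
  exists d; split; [exact Hd|].
  intros y [_ Hyx]; simpl in *; unfold R_dist in *.
  apply Hy; [apply Rmin_r|].
  eapply Rle_lt_trans; [|exact Hyx].
  unfold Rmin; destruct (Rle_dec y 0), (Rle_dec x 0);
    unfold Rabs; repeat destruct (Rcase_abs _); lra.
Qed.

(* A primitive  x |-> \int_{-oo}^x F  of a function continuous on (-oo, 0] is
   continuous there; indeed it is locally Lipschitz. *)
Lemma improper_int_continuous (F I : R -> R) :
  continuous_nonpos F ->
  (forall x, x <= 0 -> improper_int_upto F x (I x)) -> continuous_nonpos I.
Proof.
  intros HF HI x Hx eps Heps.
  destruct (HF x Hx 1 Rlt_0_1) as [d1 [Hd1 H1]].
  set (B := Rabs (F x) + 1).
  assert (HB : 0 < B) by (unfold B; generalize (Rabs_pos (F x)); lra).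
  exists (Rmin d1 (eps / B)); split.
  { apply Rmin_pos; [exact Hd1|apply Rdiv_lt_0_compat; auto]. }
  intros y Hy Hyx.
  assert (Hyd1 : Rabs (y - x) < d1) by (generalize (Rmin_l d1 (eps / B)); lra).
  assert (HyB : Rabs (y - x) * B < eps).
  { apply (Rmult_lt_reg_r (/ B)); [apply Rinv_0_lt_compat; lra|].
    rewrite Rmult_assoc, Rinv_r by lra.
    generalize (Rmin_r d1 (eps / B)); unfold Rdiv; lra. }
  assert (Bnd : forall u v, Rmin x y <= u <= v -> v <= Rmax x y ->
     Rabs (RInt F u v) <= B * (v - u)).
  { intros u v Huv Hv.
    assert (Hv0 : v <= 0) by (generalize (Rmax_lub x y 0 Hx Hy); lra).
    destruct (improper_int_difference F I HI u v ltac:(lra)) as [Hex _].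
    replace (B * (v - u)) with (RInt (fun _ => B) u v)
      by (rewrite (RInt_const (V:=R_CompleteNormedModule)); simpl; unfold scal; simpl;
          unfold mult; simpl; ring).
    apply RInt_abs_le; [lra|exact Hex|apply (ex_RInt_const (V:=R_NormedModule))|].
    intros t Ht.
    assert (Htx : Rabs (t - x) < d1).
    { eapply Rle_lt_trans; [|exact Hyd1].
      unfold Rmin, Rmax in *; destruct (Rle_dec x y);
        unfold Rabs; repeat destruct (Rcase_abs _); lra. }
    generalize (H1 t ltac:(lra) Htx) (Rabs_triang_inv (F t) (F x)); unfold B; lra. }
  destruct (Rle_dec x y) as [Hle|Hlt].
  - destruct (improper_int_difference F I HI x y ltac:(lra)) as [_ ->].
    rewrite Rmin_left, Rmax_right in Bnd by lra.
    generalize (Bnd x y ltac:(lra) ltac:(lra)); rewrite Rabs_pos_eq in HyB by lra; nra.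
  - destruct (improper_int_difference F I HI y x ltac:(lra)) as [_ E].
    replace (I y - I x) with (- (I x - I y)) by ring; rewrite Rabs_Ropp, E.
    rewrite Rmin_right, Rmax_left in Bnd by lra.
    generalize (Bnd y x ltac:(lra) ltac:(lra)); rewrite Rabs_left in HyB by lra; nra.
Qed.

Definition damped_cos_primitive (a b s : R) : R :=
  exp (- (a * s)) * (b * sin (b * s) - a * cos (b * s)) / (a * a + b * b).

Lemma damped_cos_primitive_derive (a b s : R) :
  0 < a * a + b * b ->
  is_derive (damped_cos_primitive a b) s (exp (- (a * s)) * cos (b * s)).
Proof.
  intros Hab; unfold damped_cos_primitive; auto_derive; [trivial|field; lra].
Qed.

Lemma exp_neg_le_1 (t : R) : 0 <= t -> exp (- t) <= 1.
Proof.
  intros Ht; rewrite <- exp_0.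
  destruct (Rle_lt_or_eq_dec 0 t Ht) as [Hlt|<-].
  - apply Rlt_le, exp_increasing; lra.
  - rewrite Ropp_0; apply Rle_refl.
Qed.

(* On s >= 0 the primitive is O(1/|b|), uniformly in the damping a >= 0: this
   uniformity is what makes the final bound on |b| independent of a. *)
Lemma damped_cos_primitive_bound (a b s : R) :
  0 <= a -> b <> 0 -> 0 <= s -> Rabs (damped_cos_primitive a b s) <= 2 / Rabs b.
Proof.
  intros Ha Hb Hs.
  set (A := Rabs a); set (B := Rabs b).
  assert (HB : 0 < B) by (apply Rabs_pos_lt; exact Hb).
  assert (HA : 0 <= A) by apply Rabs_pos.
  assert (Ea : A * A = a * a) by (unfold A; rewrite <- Rabs_mult; apply Rabs_pos_eq; nra).
  assert (Eb : B * B = b * b) by (unfold B; rewrite <- Rabs_mult; apply Rabs_pos_eq; nra).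
  set (S := a * a + b * b).
  assert (HS : 0 < S) by (unfold S; nra).
  set (e := exp (- (a * s))).
  assert (He : 0 < e <= 1) by (split; [apply exp_pos|apply exp_neg_le_1; nra]).
  (* |numerator| <= |a| + |b|, and (|a| + |b|) |b| <= 2 (a^2 + b^2). *)
  set (N := Rabs (b * sin (b * s) - a * cos (b * s))).
  assert (HN : 0 <= N <= A + B).
  { split; [apply Rabs_pos|].
    eapply Rle_trans; [apply Rabs_triang|]; rewrite Rabs_Ropp, !Rabs_mult; fold A B.
    assert (Rabs (sin (b * s)) <= 1) by (apply Rabs_le, SIN_bound).
    assert (Rabs (cos (b * s)) <= 1) by (apply Rabs_le, COS_bound).
    generalize (Rabs_pos (sin (b * s))) (Rabs_pos (cos (b * s))); nra. }
  assert (HeN : e * N <= A + B) by nra.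
  assert (A * B <= A * A + B * B) by nra.
  unfold damped_cos_primitive, Rdiv; fold e S.
  rewrite !Rabs_mult, Rabs_inv, (Rabs_pos_eq e), (Rabs_pos_eq S) by lra; fold N.
  apply (Rmult_le_reg_r (S * B)); [nra|].
  replace (e * N * / S * (S * B)) with (e * N * B) by (field; lra).
  replace (2 * / B * (S * B)) with (2 * S) by (field; lra).
  unfold S; nra.
Qed.

Lemma damped_cos_dominated (beta a b s : R) :
  0 <= a -> 0 <= s -> Rabs (beta * exp (- (a * s)) * cos (b * s)) <= Rabs beta.
Proof.
  intros Ha Hs.
  rewrite !Rabs_mult, (Rabs_pos_eq (exp _)) by apply Rlt_le, exp_pos.
  assert (exp (- (a * s)) <= 1) by (apply exp_neg_le_1; nra).
  assert (Rabs (cos (b * s)) <= 1) by (apply Rabs_le, COS_bound).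
  assert (exp (- (a * s)) * Rabs (cos (b * s)) <= 1)
    by (generalize (exp_pos (- (a * s))) (Rabs_pos (cos (b * s))); nra).
  generalize (Rabs_pos beta); nra.
Qed.

(* Integrals of  h * G'  with h slowly varying and G bounded: splitting a
   segment into n cells of length D, on each cell h is within eta of a
   constant, and the constant part integrates exactly to a difference of
   values of G.  This is the quantitative core of the Riemann-Lebesgue lemma. *)
Section Oscillation.

Variables h g G w : R -> R.
Hypothesis h_cont : forall x, continuity_pt h x.
Hypothesis g_cont : forall x, continuity_pt g x.
Hypothesis w_cont : forall x, continuity_pt w x.
Hypothesis G_primitive : forall x, is_derive G x (g x).

Let hg_cont : forall x, continuity_pt (fun x => h x * g x) x.
Proof. intro; apply continuity_pt_mult; auto. Qed.

Lemma RInt_derivative (a b : R) : RInt g a b = G b - G a.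
Proof.
  apply is_RInt_unique, (is_RInt_derive (V:=R_CompleteNormedModule)).
  - intros; apply G_primitive.
  - intros; apply continuity_pt_filterlim, g_cont.
Qed.

Lemma cell_bound (x0 D eta Hm C : R) :
  0 <= D ->
  (forall x, x0 <= x <= x0 + D -> Rabs (g x) <= w x) ->
  Rabs (G x0) <= C -> Rabs (G (x0 + D)) <= C -> Rabs (h x0) <= Hm ->
  (forall x, x0 <= x <= x0 + D -> Rabs (h x - h x0) <= eta) ->
  Rabs (RInt (fun x => h x * g x) x0 (x0 + D))
    <= eta * RInt w x0 (x0 + D) + 2 * C * Hm.
Proof.
  intros HD Hgw HG0 HG1 Hh0 Hosc.
  set (r := fun x => (h x - h x0) * g x).
  assert (r_cont : forall x, continuity_pt r x).
  { intro; apply continuity_pt_mult; [apply continuity_pt_minus|]; auto.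
    apply continuity_pt_const; intros u v; reflexivity. }
  assert (Split : RInt (fun x => h x * g x) x0 (x0 + D)
                  = RInt r x0 (x0 + D) + h x0 * (G (x0 + D) - G x0)).
  { rewrite <- RInt_derivative.
    rewrite <- (RInt_scal (V:=R_CompleteNormedModule)) by (apply ex_RInt_continuity; auto).
    rewrite <- (RInt_plus (V:=R_CompleteNormedModule))
      by (apply ex_RInt_continuity; auto; intro;
          apply continuity_pt_mult; auto; apply continuity_pt_const; intros u v; reflexivity).
    apply RInt_ext; intros x _; unfold r; simpl; unfold plus, scal; simpl; unfold mult; simpl.
    ring. }
  assert (Var : Rabs (RInt r x0 (x0 + D)) <= eta * RInt w x0 (x0 + D)).
  { rewrite <- (RInt_scal (V:=R_CompleteNormedModule)) by (apply ex_RInt_continuity; auto).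
    apply RInt_abs_le; [lra|apply ex_RInt_continuity; auto| |].
    - apply ex_RInt_continuity; intro; apply continuity_pt_mult; auto.
      apply continuity_pt_const; intros u v; reflexivity.
    - intros x Hx; unfold r; rewrite Rabs_mult.
      apply Rmult_le_compat; try apply Rabs_pos; auto. }
  assert (Const : Rabs (h x0 * (G (x0 + D) - G x0)) <= Hm * (C + C)).
  { rewrite Rabs_mult; apply Rmult_le_compat; try apply Rabs_pos; [exact Hh0|].
    unfold Rminus; eapply Rle_trans; [apply Rabs_triang|]; rewrite Rabs_Ropp; lra. }
  rewrite Split; eapply Rle_trans; [apply Rabs_triang|]; lra.
Qed.

Lemma oscillatory_integral_bound (A B D eta Hm C : R) :
  0 <= D ->
  (forall x, A <= x <= B -> Rabs (g x) <= w x) ->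
  (forall x, A <= x <= B -> Rabs (G x) <= C) ->
  (forall x, A <= x <= B -> Rabs (h x) <= Hm) ->
  (forall x y, A <= x <= B -> A <= y <= B -> Rabs (x - y) <= D ->
     Rabs (h x - h y) <= eta) ->
  forall n : nat, A + INR n * D <= B ->
  Rabs (RInt (fun x => h x * g x) A (A + INR n * D))
    <= eta * RInt w A (A + INR n * D) + INR n * (2 * C * Hm).
Proof.
  intros HD Hgw HG Hh Hosc n.
  induction n as [|n IH]; intros Hn.
  - rewrite Rmult_0_l, Rplus_0_r, !RInt_point.
    change (Rabs 0 <= eta * 0 + 0 * (2 * C * Hm)); rewrite Rabs_R0; lra.
  - set (x0 := A + INR n * D).
    assert (Ex : A + INR (S n) * D = x0 + D) by (unfold x0; rewrite S_INR; ring).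
    rewrite Ex in *.
    assert (Hx0 : A <= x0) by (unfold x0; generalize (pos_INR n); nra).
    rewrite (RInt_Chasles_R _ A x0 (x0 + D)) by (apply ex_RInt_continuity; auto).
    rewrite (RInt_Chasles_R w A x0 (x0 + D)) by (apply ex_RInt_continuity; auto).
    assert (Cell := cell_bound x0 D eta Hm C HD
      ltac:(intros; apply Hgw; lra) ltac:(apply HG; lra) ltac:(apply HG; lra)
      ltac:(apply Hh; lra)
      ltac:(intros x Hx; apply Hosc; try lra; rewrite Rabs_pos_eq; lra)).
    specialize (IH ltac:(unfold x0 in *; lra)); fold x0 in IH.
    rewrite S_INR; eapply Rle_trans; [apply Rabs_triang|]; lra.
Qed.

End Oscillation.

Lemma uniform_mesh (h : R -> R) (A B eta : R) :
  A < B -> (forall x, continuity_pt h x) -> 0 < eta ->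
  exists n : nat, (0 < n)%nat /\
    forall x y, A <= x <= B -> A <= y <= B -> Rabs (x - y) <= (B - A) / INR n ->
      Rabs (h x - h y) <= eta.
Proof.
  intros HAB Hh Heta.
  destruct (Heine h (fun c => A <= c <= B) (compact_P3 A B) (fun x _ => Hh x)
              (mkposreal eta Heta)) as [[del Hdel] Hunif]; simpl in Hunif.
  destruct (archimed_cor1 (del / (B - A))) as [n [Hn Hn0]];
    [apply Rdiv_lt_0_compat; lra|].
  exists n; split; [exact Hn0|]; intros x y Hx Hy Hxy.
  assert (HD : (B - A) / INR n < del).
  { apply (Rmult_lt_compat_l (B - A)) in Hn; [|lra].
    replace ((B - A) * (del / (B - A))) with del in Hn by (field; lra).
    unfold Rdiv; lra. }
  apply Rlt_le, Hunif; auto; lra.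
Qed.

(* Oscillation estimate for fixed a >= 0 and b <> 0, on a mesh of n cells:
   h e^{-aP} cos(bP) w = h * G' with |G| <= 2/|b|. *)
Lemma damped_oscillation_bound (h w P : R -> R) (A B K eta : R) (n : nat) (a b : R) :
  A < B -> (0 < n)%nat ->
  (forall x, continuity_pt h x) -> (forall x, continuity_pt w x) ->
  (forall x, is_derive P x (- w x)) ->
  (forall x, A <= x <= B -> 0 <= w x) ->
  (forall x, A <= x <= B -> 0 <= P x) ->
  (forall x, A <= x <= B -> Rabs (h x) <= K) ->
  (forall x y, A <= x <= B -> A <= y <= B -> Rabs (x - y) <= (B - A) / INR n ->
     Rabs (h x - h y) <= eta) ->
  0 <= a -> b <> 0 ->
  Rabs (RInt (fun x => h x * (w x * exp (- (a * P x)) * cos (b * P x))) A B)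
    <= eta * RInt w A B + INR n * (2 * (2 / Rabs b) * K).
Proof.
  intros HAB Hn Hh Hw HP Hw0 HP0 HK Hmesh Ha Hb.
  assert (Hn' : 0 < INR n) by (apply lt_0_INR; exact Hn).
  assert (P_cont : forall x, continuity_pt P x).
  { intro x; apply continuity_pt_filterlim, (ex_derive_continuous (V:=R_NormedModule)).
    eexists; apply HP. }
  set (g := fun x => w x * exp (- (a * P x)) * cos (b * P x)).
  set (G := fun x => - damped_cos_primitive a b (P x)).
  assert (G_primitive : forall x, is_derive G x (g x)).
  { intro x.
    assert (Hab : 0 < a * a + b * b) by (assert (0 < b * b) by nra; nra).
    generalize (is_derive_opp _ _ _
      (is_derive_comp _ P x _ _ (damped_cos_primitive_derive a b (P x) Hab) (HP x))).
    unfold G, g, scal, opp; simpl; unfold mult; simpl.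
    replace (- (- w x * (exp (- (a * P x)) * cos (b * P x))))
      with (w x * exp (- (a * P x)) * cos (b * P x)) by ring; auto. }
  assert (g_cont : forall x, continuity_pt g x).
  { intro x; unfold g.
    repeat apply continuity_pt_mult; auto.
    - apply (continuity_pt_comp (fun y => - (a * P y)) exp);
        [|apply derivable_continuous_pt, derivable_pt_exp].
      apply continuity_pt_opp, continuity_pt_mult; auto.
      apply continuity_pt_const; intros u v; reflexivity.
    - apply (continuity_pt_comp (fun y => b * P y) cos);
        [|apply derivable_continuous_pt, derivable_pt_cos].
      apply continuity_pt_mult; auto.
      apply continuity_pt_const; intros u v; reflexivity. }
  assert (Hgw : forall x, A <= x <= B -> Rabs (g x) <= w x).
  { intros x Hx; rewrite <- (Rabs_pos_eq (w x)) by auto.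
    apply damped_cos_dominated; auto. }
  assert (HG : forall x, A <= x <= B -> Rabs (G x) <= 2 / Rabs b).
  { intros x Hx; unfold G; rewrite Rabs_Ropp.
    apply damped_cos_primitive_bound; auto. }
  assert (HnD : A + INR n * ((B - A) / INR n) = B) by (field; lra).
  assert (Bound := oscillatory_integral_bound h g G w Hh g_cont Hw G_primitive
    A B ((B - A) / INR n) eta K (2 / Rabs b)
    ltac:(apply Rlt_le, Rdiv_lt_0_compat; lra) Hgw HG HK Hmesh n ltac:(lra)).
  rewrite HnD in Bound; exact Bound.
Qed.

Lemma damped_oscillation_small (h w P : R -> R) (A B K : R) :
  A < B ->
  (forall x, continuity_pt h x) -> (forall x, continuity_pt w x) ->
  (forall x, is_derive P x (- w x)) ->
  (forall x, A <= x <= B -> 0 <= w x) ->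
  (forall x, A <= x <= B -> 0 <= P x) ->
  (forall x, A <= x <= B -> Rabs (h x) <= K) ->
  forall eps, 0 < eps -> exists Lambda, 0 < Lambda /\
    forall a b, 0 <= a -> Lambda <= Rabs b ->
      Rabs (RInt (fun x => h x * (w x * exp (- (a * P x)) * cos (b * P x))) A B) < eps.
Proof.
  intros HAB Hh Hw HP Hw0 HP0 HK eps Heps.
  assert (K0 : 0 <= K) by (eapply Rle_trans; [apply Rabs_pos|apply (HK A); lra]).
  set (W := RInt w A B).
  assert (HW : 0 <= W)
    by (apply RInt_ge_0; [lra|apply ex_RInt_continuity; auto|intros; apply Hw0; lra]).
  (* A mesh fine enough that the oscillation of h contributes less than eps/2. *)
  set (eta := eps / 2 / (W + 1)).
  assert (Heta : 0 < eta) by (unfold eta; apply Rdiv_lt_0_compat; lra).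
  assert (HetaW : eta * W < eps / 2).
  { unfold eta; apply (Rmult_lt_reg_r (W + 1)); [lra|].
    replace (eps / 2 / (W + 1) * W * (W + 1)) with (eps / 2 * W) by (field; lra); nra. }
  destruct (uniform_mesh h A B eta HAB Hh Heta) as [n [Hn Hmesh]].
  assert (Hn' : 0 < INR n) by (apply lt_0_INR; exact Hn).
  (* Beyond Lambda the constant parts contribute  n * 4K/|b| < eps/2. *)
  set (Lambda := 8 * INR n * K / eps + 1).
  assert (HL0 : 0 <= 8 * INR n * K / eps)
    by (apply Rmult_le_pos; [nra|apply Rlt_le, Rinv_0_lt_compat; lra]).
  exists Lambda; split; [unfold Lambda; lra|].
  intros a b Ha Hb.
  assert (Hb0 : 0 < Rabs b) by (unfold Lambda in Hb; lra).
  assert (Hbnz : b <> 0) by (intro E; rewrite E, Rabs_R0 in Hb0; lra).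
  assert (Bound := damped_oscillation_bound h w P A B K eta n a b
    HAB Hn Hh Hw HP Hw0 HP0 HK Hmesh Ha Hbnz); fold W in Bound.
  assert (INR n * (2 * (2 / Rabs b) * K) < eps / 2).
  { apply (Rmult_lt_reg_r (Rabs b)); [exact Hb0|].
    replace (INR n * (2 * (2 / Rabs b) * K) * Rabs b) with (4 * INR n * K) by (field; lra).
    assert (Lambda * eps <= Rabs b * eps) by (apply Rmult_le_compat_r; lra).
    assert (E : Lambda * eps = 8 * INR n * K + eps) by (unfold Lambda; field; lra).
    nra. }
  lra.
Qed.

Lemma c0_clamped_continuous (Ic : R -> R) :
  continuous_nonpos Ic -> (forall x, x <= 0 -> 0 < c0 Ic x) ->
  forall x, continuity_pt (fun y => c0 Ic (Rmin y 0)) x.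
Proof.
  intros HIc Hc0 x; unfold c0.
  assert (Hrad : 0 <= 2 * Ic (Rmin x 0)).
  { destruct (Rle_dec 0 (2 * Ic (Rmin x 0))) as [|Hneg]; [assumption|].
    generalize (Hc0 (Rmin x 0) (Rmin_r _ _)); unfold c0.
    rewrite sqrt_neg_0; lra. }
  apply (continuity_pt_comp (fun y => 2 * Ic (Rmin y 0)) sqrt x);
    [|exact (continuity_pt_sqrt _ Hrad)].
  apply continuity_pt_mult; [apply continuity_pt_const; intros u v; reflexivity|].
  exact (continuity_clamp Ic HIc x).
Qed.

(* b0 * c0 = fu * c0 + f / 2 is continuous: the singular factor 1 / c0 of b0
   is cancelled. *)
Lemma b0c0_clamped_continuous (f fu : R -> R -> R) (q : R) (Ic : R -> R) :
  continuous_nonpos (fun x => f x (u0s q)) ->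
  continuous_nonpos (fun x => fu x (u0s q)) ->
  (forall x, x <= 0 -> 0 < c0 Ic x) ->
  (forall x, continuity_pt (fun y => c0 Ic (Rmin y 0)) x) ->
  forall x, continuity_pt (fun y => b0 f fu q Ic (Rmin y 0) * c0 Ic (Rmin y 0)) x.
Proof.
  intros Hf Hfu Hc0 Hc0_cont x.
  apply (continuity_pt_ext
    (fun y => fu (Rmin y 0) (u0s q) * c0 Ic (Rmin y 0) + f (Rmin y 0) (u0s q) / 2)).
  - intro y; unfold b0; generalize (Hc0 (Rmin y 0) (Rmin_r _ _)); intro; field; lra.
  - apply continuity_pt_plus; [apply continuity_pt_mult; auto|].
    + exact (continuity_clamp _ Hfu x).
    + apply continuity_pt_div; [exact (continuity_clamp _ Hf x)| |lra].
      apply continuity_pt_const; intros u v; reflexivity.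
Qed.

Lemma travel_time_phase (v w p : R -> R) :
  (forall x, continuity_pt w x) ->
  (forall x, x <= 0 -> w x = v x) ->
  (forall x, x <= 0 -> RInt_eq v x 0 (p x)) ->
  (forall x, is_derive (fun y => RInt w y 0) x (- w x)) /\
  (forall x, x <= 0 -> RInt w x 0 = p x).
Proof.
  intros Hw Hwv Hp; split.
  - intro x; apply (is_derive_RInt' (V:=R_NormedModule) w _ x 0).
    + apply filter_forall; intro y.
      apply (RInt_correct (V:=R_CompleteNormedModule)), ex_RInt_continuity, Hw.
    + apply continuity_pt_filterlim, Hw.
  - intros x Hx; rewrite <- (proj2 (RInt_eq_RInt _ _ _ _ (Hp x Hx))).
    apply RInt_ext; intros y Hy; rewrite Rmin_left, Rmax_right in Hy by lra.
    apply Hwv; lra.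
Qed.

Lemma travel_time_nonneg (v p : R -> R) :
  (forall x, x <= 0 -> 0 < v x) ->
  (forall x, x <= 0 -> RInt_eq v x 0 (p x)) -> forall x, x <= 0 -> 0 <= p x.
Proof.
  intros Hv Hp x Hx; destruct (RInt_eq_RInt _ _ _ _ (Hp x Hx)) as [Hex <-].
  apply RInt_ge_0; [exact Hx|exact Hex|intros; apply Rlt_le, Hv; lra].
Qed.

Section WaveProfile.

Variables (q : R) (f fu : R -> R -> R) (Ic p : R -> R) (K : R).
Hypothesis f_cont : continuous_nonpos (fun x => f x (u0s q)).
Hypothesis fu_cont : continuous_nonpos (fun x => fu x (u0s q)).
Hypothesis Ic_improper : forall x, x <= 0 -> improper_int_upto (fun y => f y (u0s q)) x (Ic x).
Hypothesis c0_pos : forall x, x <= 0 -> 0 < c0 Ic x.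
Hypothesis p_travel_time : forall x, x <= 0 -> RInt_eq (fun y => / c0 Ic y) x 0 (p x).
Hypothesis b0c0_bounded : forall x, x <= 0 -> Rabs (b0 f fu q Ic x * c0 Ic x) <= K.

Lemma p_nonneg : forall x, x <= 0 -> 0 <= p x.
Proof.
  apply (travel_time_nonneg (fun y => / c0 Ic y) p); [|exact p_travel_time].
  intros; apply Rinv_0_lt_compat; auto.
Qed.

Lemma b0_oscillation_small (M : R) : 0 < M ->
  forall eps, 0 < eps -> exists Lambda, 0 < Lambda /\
    forall a b, 0 <= a -> Lambda <= Rabs b ->
      Rabs (RInt (fun xi => b0 f fu q Ic xi * exp (- (a * p xi)) * cos (b * p xi))
                 (-M) 0) < eps.
Proof.
  intros HM eps Heps.
  assert (ct_cont := c0_clamped_continuous Ic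
    (improper_int_continuous _ _ f_cont Ic_improper) c0_pos).
  set (ct := fun y => c0 Ic (Rmin y 0)) in ct_cont.
  assert (ct_pos : forall x, 0 < ct x) by (intro; apply c0_pos, Rmin_r).
  assert (w_cont : forall x, continuity_pt (fun y => / ct y) x)
    by (intro; apply continuity_pt_inv; [apply ct_cont|apply Rgt_not_eq, ct_pos]).
  destruct (travel_time_phase _ (fun y => / ct y) p w_cont
    ltac:(intros x Hx; unfold ct; rewrite Rmin_left by lra; reflexivity) p_travel_time)
    as [HP P_eq].
  destruct (damped_oscillation_small
    (fun y => b0 f fu q Ic (Rmin y 0) * c0 Ic (Rmin y 0)) (fun y => / ct y)
    (fun y => RInt (fun z => / ct z) y 0) (-M) 0 K ltac:(lra)
    (b0c0_clamped_continuous f fu q Ic f_cont fu_cont c0_pos ct_cont) w_cont HP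
    ltac:(intros; apply Rlt_le, Rinv_0_lt_compat, ct_pos)
    ltac:(intros x Hx; cbv beta; rewrite P_eq by lra; apply p_nonneg; lra)
    ltac:(intros x Hx; apply b0c0_bounded, Rmin_r) eps Heps) as [Lambda [HLambda Hsmall]].
  exists Lambda; split; [exact HLambda|]; intros a b Ha Hb.
  erewrite RInt_ext; [apply (Hsmall a b Ha Hb)|].
  intros x Hx; rewrite Rmin_left, Rmax_right in Hx by lra.
  cbv beta; rewrite (P_eq x) by lra; unfold ct; rewrite Rmin_left by lra.
  generalize (c0_pos x ltac:(lra)); intro; simpl; field; lra.
Qed.

End WaveProfile.

Theorem theorem3
  (q : R) (f fu : R -> R -> R) (Ic p : R -> R)
  (Hq : 0 < q)
  (Hpos : forall x u, x <= 0 -> 0 < u -> 0 <= f x u)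
  (Hcont : forall u x, 0 < u -> x <= 0 ->
      limit1_in (fun y => f y u) (fun y => y <= 0) (f x u) x)
  (Hint : forall u, 0 < u -> improper_int_upto (fun x => f x u) 0 (q / 2))
  (Hderiv : forall x u, x <= 0 -> 0 < u ->
      derivable_pt_lim (fun v => f x v) u (fu x u))
  (Hfu_cont : forall x u, x <= 0 -> 0 < u ->
      forall eps, 0 < eps -> exists delta, 0 < delta /\
        forall y v, y <= 0 -> 0 < v -> Rabs (y - x) < delta -> Rabs (v - u) < delta ->
          Rabs (fu y v - fu x u) < eps)
  (HIc : forall x, x <= 0 -> improper_int_upto (fun y => f y (u0s q)) x (Ic x))
  (Hc0pos : forall x, x <= 0 -> 0 < c0 Ic x)
  (Hp : forall x, x <= 0 -> RInt_eq (fun y => / c0 Ic y) x 0 (p x))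
  (Hb0L1 : exists L, improper_int_upto (fun x => Rabs (b0 f fu q Ic x)) 0 L)
  (Hb0c0 : exists K, forall x, x <= 0 -> Rabs (b0 f fu q Ic x * c0 Ic x) <= K) :
  exists Lambda, 0 < Lambda /\
    forall a b : R, 0 < a ->
      improper_int_upto
        (fun xi => b0 f fu q Ic xi * exp (- (a * p xi)) * cos (b * p xi)) 0 (c0 Ic 0) ->
      improper_int_upto
        (fun xi => b0 f fu q Ic xi * exp (- (a * p xi)) * sin (b * p xi)) 0 0 ->
      Rabs b < Lambda.
Proof.
  destruct Hb0L1 as [L HL]; destruct Hb0c0 as [K HK].
  assert (Hu0 : 0 < u0s q) by (unfold u0s; generalize (sqrt_lt_R0 q Hq); lra).
  assert (f_cont := limit1_in_continuous_nonpos _ (fun x => Hcont _ x Hu0)).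
  assert (fu_cont : continuous_nonpos (fun x => fu x (u0s q))).
  { intros x Hx eps Heps; destruct (Hfu_cont x _ Hx Hu0 eps Heps) as [d [Hd Hfu]].
    exists d; split; [exact Hd|]; intros y Hy Hyx.
    apply Hfu; auto; rewrite Rminus_diag, Rabs_R0; exact Hd. }
  (* Beyond M the tail of |b0| is below c0(0)/3, and so is the oscillatory
     integral over [-M, 0] once |b| >= Lambda; together they cannot add up
     to c0(0). *)
  set (eps := c0 Ic 0 / 3).
  assert (Heps : 0 < eps) by (unfold eps; generalize (Hc0pos 0 (Rle_refl 0)); lra).
  destruct (improper_int_tail _ L HL eps Heps) as [N Htail].
  set (M := Rmax N 1).
  assert (HNM : N <= M /\ 1 <= M) by (split; [apply Rmax_l|apply Rmax_r]).
  destruct (b0_oscillation_small q f fu Ic p K f_cont fu_cont HIc Hc0pos Hp HK M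
              ltac:(lra) eps Heps) as [Lambda [HLambda Hsmall]].
  exists Lambda; split; [exact HLambda|].
  intros a b Ha Hcos _; apply Rnot_le_lt; intros Hb.
  assert (Bound := improper_int_value_bound _ _ _ eps M Hcos ltac:(lra)
    (fun x Hx => damped_cos_dominated _ a b _ (Rlt_le _ _ Ha)
                   (p_nonneg Ic p Hc0pos Hp x Hx))
    (fun M' HM' => Htail M M' (conj (proj1 HNM) HM'))
    (Hsmall a b (Rlt_le _ _ Ha) Hb)).
  rewrite Rabs_pos_eq in Bound by (apply Rlt_le, Hc0pos, Rle_refl).
  unfold eps in Bound; lra.
Qed.
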